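(* Let $m,n$ be integers with $2\le m<n$, and let $G$ be a Latin square graph $\mathrm{LSG}(m,n)$ (associated with some transversal 2-design $\mathrm{TD}(m,n)$). Then $\alpha(\overline{G})=\Theta(\overline{G})=\vartheta(\overline{G})=n$.
   Context: Graphs are finite, simple, undirected; $\overline{G}$ is the complement, $\alpha$ the independence number, $\Theta(G)=\sup_{k\ge1}\alpha(G^{\boxtimes k})^{1/k}$ the Shannon capacity (with $\boxtimes$ the strong product: distinct $(g,h),(g',h')$ adjacent iff ($g=g'$ or $g\sim g'$) and ($h=h'$ or $h\sim h'$)), and $\vartheta(G)$ the Lovász theta function: the maximum of $\mathrm{Tr}(BJ)$ over positive semidefinite $B$ indexed by $V(G)$ with $\mathrm{Tr}B=1$ and $B_{i,j}=0$ for $\{i,j\}\in E(G)$, $J$ the all-ones matrix. A transversal 2-design $\mathrm{TD}(m,n)$ ($m\ge2,n\ge1$) is a triple $(X,\mathscr G,\mathscr B)$ where $X$ is a set of $mn$ points, $\mathscr G$ is a partition of $X$ into $m$ groups of $n$ points each, and $\mathscr B$ is a family of subsets (blocks) of $X$ such that every block contains exactly one point of each group and every two points in different groups lie together in exactly one block. The Latin square graph $\mathrm{LSG}(m,n)$ of such a design has vertex set $\mathscr B$, two distinct blocks being adjacent iff they intersect in exactly one point. *)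

From HB Require Import structures.
From mathcomp Require Import all_boot all_order all_algebra.
From mathcomp Require Import classical_sets reals exp.

Set Implicit Arguments.
Unset Strict Implicit.
Unset Printing Implicit Defensive.

Import Order.TTheory GRing.Theory Num.Theory.
Local Open Scope ring_scope.

(* A simple graph on a finite vertex type T is given by a relation e : rel T
   (assumed/produced symmetric and irreflexive). *)

Definition compl_rel (T : finType) (e : rel T) : rel T :=
  fun x y => (x != y) && ~~ e x y.

Definition independentb (T : finType) (e : rel T) (S : {set T}) : bool :=
  [forall x in S, forall y in S, ~~ e x y].

Definition alpha (T : finType) (e : rel T) : nat :=
  \max_(S : {set T} | independentb e S) #|S|.

Definition strong_pow (T : finType) (e : rel T) (k : nat) : rel {ffun 'I_k -> T} :=
  fun x y => (x != y) && [forall i, (x i == y i) || e (x i) (y i)].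

Definition shannon_capacity (R : realType) (T : finType) (e : rel T) : R :=
  sup [set powR ((alpha (@strong_pow T e k))%:R : R) (k%:R)^-1
      | k in [set k : nat | (0 < k)%N]]%classic.

Definition psd (R : realType) (N : nat) (B : 'M[R]_N) : Prop :=
  B^T = B /\ forall x : 'cV[R]_N, 0 <= (x^T *m B *m x) 0 0.

Definition theta_feasible (R : realType) (T : finType) (e : rel T)
    (B : 'M[R]_#|T|) : Prop :=
  [/\ psd B, \tr B = 1 &
      forall i j : 'I_#|T|, e (enum_val i) (enum_val j) -> B i j = 0].

Definition lovasz_theta (R : realType) (T : finType) (e : rel T) : R :=
  sup [set \tr (B *m const_mx 1) | B in [set B | @theta_feasible R T e B]]%classic.

Definition is_TD (m n : nat) (P : finType) (groups blocks : {set {set P}}) : Prop :=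
  [/\ #|P| = (m * n)%N,
      finset.partition groups [set: P] /\
      #|groups| = m,
      (forall g, g \in groups -> #|g| = n),
      (forall B g, B \in blocks -> g \in groups -> #|B :&: g| = 1%N) &
      (forall x y : P, ~~ [exists g in groups, (x \in g) && (y \in g)] ->
         #|[set B in blocks | (x \in B) && (y \in B)]| = 1%N)].

Definition block_type (P : finType) (blocks : {set {set P}}) : finType :=
  {B : {set P} | B \in blocks}.

Definition lsg_rel (P : finType) (blocks : {set {set P}}) : rel (block_type blocks) :=
  fun B C => (val B != val C) && (#|val B :&: val C| == 1%N).
Arguments lsg_rel {P} blocks.
Arguments strong_pow {T} e k.

From HB Require Import structures.
From mathcomp Require Import classical_sets reals exp.
From mathcomp Require Import all_boot all_order all_algebra.
From mathcomp Require Import ring lra.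

Set Implicit Arguments.
Unset Strict Implicit.
Unset Printing Implicit Defensive.

Import Order.TTheory GRing.Theory Num.Theory.

(* The blocks through a point are pairwise adjacent in LSG(m,n), so they form an
   independent set of size n of the complement, and its k-fold powers are
   independent of size n^k in the strong powers.  For the upper bounds we exhibit
   a dual solution of value n of the Lovász SDP: the kernel Y = J + c E on blocks,
   where E is the orthogonal projection onto the (-m)-eigenspace of the adjacency
   matrix of LSG(m,n) and c = n^2 / (n - m + 1).  Then Y - J is positive
   semidefinite, Y has diagonal n and vanishes on the edges of LSG(m,n); such a
   kernel bounds both the theta function and the independence number by n, and
   its tensor powers bound the independence numbers of the strong powers by n^k. *)

Lemma cardsI_sum (T : finType) (A B : {set T}) : #|A :&: B| = (\sum_(x in B) (x \in A))%N.
Proof.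
rewrite -sum1_card [RHS]big_mkcond [LHS]big_mkcond /=; apply: eq_bigr => x _.
by rewrite inE andbC; case: (x \in B); case: (x \in A).
Qed.

Lemma sum_eq_mem (T : finType) (x : T) (A : {set T}) :
  (\sum_(y in A) (x == y) = (x \in A))%N.
Proof.
have [xA | xA] := boolP (x \in A).
  by rewrite (bigD1 x) //= eqxx big1 // => y /andP [_ /negbTE]; rewrite eq_sym => ->.
by rewrite big1 // => y yA; case: eqP => // xy; rewrite xy yA in xA.
Qed.

Section ThetaDual.
Variable R : realType.
Local Open Scope ring_scope.

Definition gram (I T : finType) (lam : I -> R) (g : I -> T -> R) (u v : T) : R :=
  \sum_i lam i * g i u * g i v.

Definition psd_kernel (T : finType) (Q : T -> T -> R) : Prop :=
  forall x : T -> R, 0 <= \sum_u \sum_v x u * x v * Q u v.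

(* The index i0 contributes the all-ones kernel J, so that gram lam g - J is
   positive semidefinite. *)
Definition theta_dual (T : finType) (e : rel T) (d : R) : Prop :=
  exists (I : finType) (lam : I -> R) (g : I -> T -> R) (i0 : I),
  [/\ forall i, 0 <= lam i, lam i0 = 1, forall u, g i0 u = 1,
      forall u, gram lam g u u = d &
      forall u v, u != v -> ~~ e u v -> gram lam g u v = 0].

Lemma psd_kernel_sum_le_gram (T I : finType) (Q : T -> T -> R)
    (lam : I -> R) (g : I -> T -> R) (i0 : I) :
  psd_kernel Q -> (forall i, 0 <= lam i) -> lam i0 = 1 -> (forall u, g i0 u = 1) ->
  \sum_u \sum_v Q u v <= \sum_u \sum_v Q u v * gram lam g u v.
Proof.
move=> Qpsd lam_ge0 lam_i0 g_i0.
have -> : \sum_u \sum_v Q u v * gram lam g u v =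
          \sum_i lam i * \sum_u \sum_v g i u * g i v * Q u v.
  transitivity (\sum_u \sum_v \sum_i lam i * (g i u * g i v * Q u v)).
    apply: eq_bigr => u _; apply: eq_bigr => v _; rewrite /gram big_distrr /=.
    by apply: eq_bigr => i _; ring.
  under eq_bigr do rewrite exchange_big /=.
  rewrite exchange_big /=; apply: eq_bigr => i _.
  by rewrite big_distrr /=; apply: eq_bigr => u _; rewrite big_distrr.
rewrite (bigD1 i0) //= lam_i0 mul1r.
under [X in _ <= X + _]eq_bigr do under eq_bigr do rewrite !g_i0 !mul1r.
by rewrite lerDl; apply: sumr_ge0 => i _; apply: mulr_ge0; [exact: lam_ge0 | exact: Qpsd].
Qed.

Section Bounds.
Variables (T : finType) (e : rel T).

Lemma theta_dual_bound (d : R) (Q : T -> T -> R) :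
  theta_dual e d -> psd_kernel Q -> (forall u v, e u v -> Q u v = 0) ->
  \sum_u \sum_v Q u v <= d * \sum_u Q u u.
Proof.
move=> [I [lam [g [i0 [lam_ge0 lam_i0 g_i0 gram_diag gram_off]]]]] Qpsd Q_edge.
suff <- : \sum_u \sum_v Q u v * gram lam g u v = d * \sum_u Q u u.
  exact: psd_kernel_sum_le_gram Qpsd lam_ge0 lam_i0 g_i0.
rewrite big_distrr /=; apply: eq_bigr => u _.
rewrite (bigD1 u) //= gram_diag big1 => [|v vu]; first by rewrite addr0 mulrC.
have [euv | neuv] := boolP (e u v); first by rewrite Q_edge ?mul0r.
by rewrite gram_off ?mulr0 // eq_sym.
Qed.

Lemma indep_card_le_theta_dual (d : R) (S : {set T}) :
  0 <= d -> theta_dual e d -> independentb e S -> #|S|%:R <= d.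
Proof.
move=> d_ge0 dual /forallP S_indep.
pose w u : R := (u \in S)%:R.
have sum_w : \sum_u w u = #|S|%:R.
  rewrite -sum1_card natr_sum [RHS]big_mkcond.
  by apply: eq_bigr => u _; rewrite /w; case: (u \in S).
have w_psd : psd_kernel (fun u v => w u * w v).
  move=> x; have -> : \sum_u \sum_v x u * x v * (w u * w v) = (\sum_u x u * w u) ^+ 2.
    rewrite expr2 big_distrl /=; apply: eq_bigr => u _; rewrite big_distrr /=.
    by apply: eq_bigr => v _; rewrite mulrACA.
  exact: sqr_ge0.
have w_edge u v : e u v -> w u * w v = 0.
  rewrite /w; case: (boolP (u \in S)) => uS; last by rewrite mul0r.
  case: (boolP (v \in S)) => vS euv; last by rewrite mulr0.
  by have := S_indep u; rewrite uS => /forallP /(_ v); rewrite vS euv.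
have := theta_dual_bound dual w_psd w_edge.
have -> : \sum_u \sum_v w u * w v = #|S|%:R ^+ 2.
  by rewrite -sum_w expr2 big_distrl /=; apply: eq_bigr => u _; rewrite big_distrr.
have -> : \sum_u w u * w u = #|S|%:R.
  rewrite -sum_w; apply: eq_bigr => u _.
  by rewrite /w; case: (u \in S); rewrite ?mulr1 ?mulr0.
have [-> | S_gt0] := posnP #|S|; first by [].
by rewrite expr2 mulrC ler_pM2r ?ltr0n.
Qed.

Lemma sum_enum_rank (F : 'I_#|T| -> R) : \sum_i F i = \sum_u F (enum_rank u).
Proof. exact: (reindex _ (onW_bij _ (@enum_rank_bij T))). Qed.

Lemma lovasz_feasible_le_theta_dual (d : R) (B : 'M[R]_#|T|) :
  theta_dual e d -> theta_feasible e B -> \tr (B *m const_mx 1) <= d.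
Proof.
move=> dual [[_ B_psd] trB B_edge].
pose Q u v := B (enum_rank u) (enum_rank v).
have Q_psd : psd_kernel Q.
  move=> x; have := B_psd (\col_i x (enum_val i)); rewrite mxE sum_enum_rank.
  under eq_bigr do rewrite !mxE big_distrl sum_enum_rank /=.
  rewrite exchange_big; congr (_ <= _); apply: eq_bigr => u _; apply: eq_bigr => v _.
  by rewrite !mxE !enum_rankK /Q mulrAC.
have Q_edge u v : e u v -> Q u v = 0.
  by move=> euv; apply: B_edge; rewrite !enum_rankK.
have diag_Q : \sum_u Q u u = 1 by rewrite -trB /mxtrace sum_enum_rank.
have -> : \tr (B *m const_mx 1) = \sum_u \sum_v Q u v.
  rewrite /mxtrace sum_enum_rank; apply: eq_bigr => u _.
  by rewrite mxE sum_enum_rank; apply: eq_bigr => v _; rewrite mxE mulr1.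
by have := theta_dual_bound dual Q_psd Q_edge; rewrite diag_Q mulr1.
Qed.

End Bounds.

Lemma theta_dual_one_add_gram (T I : finType) (e : rel T) (d : R)
    (lam : I -> R) (g : I -> T -> R) :
  (forall i, 0 <= lam i) -> (forall u, 1 + gram lam g u u = d) ->
  (forall u v, u != v -> ~~ e u v -> 1 + gram lam g u v = 0) ->
  theta_dual e d.
Proof.
move=> lam_ge0 gram_diag gram_off.
pose lam' o := if o is Some i then lam i else 1.
pose g' o u := if o is Some i then g i u else 1.
have gram_shift u v : gram lam' g' u v = 1 + gram lam g u v.
  rewrite /gram (bigD1 None) //= !mulr1; congr (_ + _).
  rewrite (reindex_omap Some id) => [|[i|] //]; apply: eq_bigl => i /=.
  by rewrite eqxx.
exists (option I), lam', g', None; split => // [[i|] | u | u v uv euv] //=.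
- by rewrite gram_shift.
- by rewrite gram_shift gram_off.
Qed.

Lemma gram_strong_pow (I T : finType) (lam : I -> R) (g : I -> T -> R) k
    (u v : {ffun 'I_k -> T}) :
  \prod_i gram lam g (u i) (v i) =
  gram (fun rho : {ffun 'I_k -> I} => \prod_i lam (rho i))
       (fun rho (w : {ffun 'I_k -> T}) => \prod_i g (rho i) (w i)) u v.
Proof. by rewrite /gram bigA_distr_bigA /=; apply: eq_bigr => rho _; rewrite -!big_split. Qed.

Lemma theta_dual_strong_pow (T : finType) (e : rel T) (d : R) k :
  theta_dual e d -> theta_dual (strong_pow e k) (d ^+ k).
Proof.
move=> [I [lam [g [i0 [lam_ge0 lam_i0 g_i0 gram_diag gram_off]]]]].
exists {ffun 'I_k -> I}, (fun rho : {ffun 'I_k -> I} => \prod_i lam (rho i)),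
  (fun (rho : {ffun 'I_k -> I}) (w : {ffun 'I_k -> T}) => \prod_i g (rho i) (w i)),
  [ffun=> i0]; split.
- by move=> rho; apply: prodr_ge0.
- by rewrite big1 // => i _; rewrite ffunE.
- by move=> u; rewrite big1 // => i _; rewrite ffunE.
- by move=> u; rewrite -gram_strong_pow (eq_bigr (fun=> d)) ?prodr_const ?card_ord.
- move=> u v uv; rewrite /strong_pow uv /= => /forallPn [i].
  rewrite negb_or => /andP [uvi euvi].
  by rewrite -gram_strong_pow (bigD1 i) //= gram_off ?mul0r.
Qed.

Lemma indep_strong_pow (T : finType) (e : rel T) (S : {set T}) k :
  independentb e S ->
  independentb (strong_pow e k) [set u : {ffun 'I_k -> T} | u \in ffun_on S].
Proof.
move=> /forallP S_indep.
apply/forallP => u; apply/implyP; rewrite inE => /ffun_onP uS.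
apply/forallP => v; apply/implyP; rewrite inE => /ffun_onP vS.
rewrite /strong_pow negb_and negbK; have [//|uv] /= := eqVneq u v.
have [i uvi] : exists i, u i != v i.
  apply/existsP; apply: contraNT uv => /existsPn uv_eq.
  by apply/eqP/ffunP => i; apply/eqP; have := uv_eq i; rewrite negbK.
apply/forallPn; exists i; rewrite negb_or uvi /=.
by have := S_indep (u i); rewrite uS => /forallP /(_ (v i)); rewrite vS.
Qed.

Lemma lovasz_feasible_of_indep (T : finType) (e : rel T) (S : {set T}) :
  independentb e S -> (0 < #|S|)%N ->
  exists2 B : 'M[R]_#|T|, theta_feasible e B & \tr (B *m const_mx 1) = #|S|%:R.
Proof.
move=> /forallP S_indep S_gt0.
pose s (i : 'I_#|T|) : R := (enum_val i \in S)%:R.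
have sum_s : \sum_i s i = #|S|%:R.
  rewrite sum_enum_rank -sum1_card natr_sum [RHS]big_mkcond /=.
  by apply: eq_bigr => u _; rewrite /s enum_rankK; case: (u \in S).
have s_idem i : s i * s i = s i by rewrite /s; case: (_ \in S); rewrite ?mulr1 ?mulr0.
have S_neq0 : (#|S|%:R : R) != 0 by rewrite pnatr_eq0 -lt0n.
exists (\matrix_(i, j) (s i * s j / #|S|%:R)); first split; first split.
- by apply/matrixP => i j; rewrite !mxE [s j * _]mulrC.
- move=> x; rewrite mxE.
  transitivity (0 <= \sum_j (\sum_i x i 0 * s i / #|S|%:R) * (x j 0 * s j)).
    congr (_ <= _); apply: eq_bigr => j _; rewrite mxE big_distrl /= big_distrl /=.
    by apply: eq_bigr => i _; rewrite !mxE; ring.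
  rewrite -big_distrr /= -big_distrl /= mulrAC -expr2.
  by apply: divr_ge0; [apply: sqr_ge0 | apply: ler0n].
- rewrite /mxtrace (eq_bigr (fun i => s i / #|S|%:R)); last by move=> i _; rewrite mxE s_idem.
  by rewrite -big_distrl /= sum_s divff.
- move=> i j eij; rewrite mxE /s.
  case: (boolP (enum_val i \in S)) => iS; last by rewrite !mul0r.
  case: (boolP (enum_val j \in S)) => jS; last by rewrite mulr0 mul0r.
  by have := S_indep (enum_val i); rewrite iS => /forallP /(_ (enum_val j)); rewrite jS eij.
- rewrite /mxtrace (eq_bigr (fun i => s i * #|S|%:R / #|S|%:R)); last first.
    move=> i _; rewrite mxE (eq_bigr (fun j => s i * s j / #|S|%:R)).
      by rewrite -big_distrl /= -big_distrr /= sum_s.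
    by move=> j _; rewrite !mxE mulr1.
  by under eq_bigr do rewrite mulfK //; rewrite sum_s.
Qed.

Lemma alpha_eq_of_theta_dual (T : finType) (e : rel T) (S : {set T}) :
  independentb e S -> theta_dual e #|S|%:R -> alpha e = #|S|.
Proof.
move=> S_indep dual; apply/eqP; rewrite eqn_leq; apply/andP; split.
  apply/bigmax_leqP => S' S'_indep; rewrite -(ler_nat R).
  exact: indep_card_le_theta_dual (ler0n _ _) dual S'_indep.
exact: leq_bigmax_cond.
Qed.

Lemma alpha_strong_pow_eq_of_theta_dual (T : finType) (e : rel T) (S : {set T}) k :
  independentb e S -> theta_dual e #|S|%:R -> alpha (strong_pow e k) = (#|S| ^ k)%N.
Proof.
move=> S_indep dual.
have card_S_k : #|[set u : {ffun 'I_k -> T} | u \in ffun_on S]| = (#|S| ^ k)%N.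
  by rewrite cardsE card_ffun_on card_ord.
rewrite -card_S_k; apply: alpha_eq_of_theta_dual; first exact: indep_strong_pow.
by rewrite card_S_k natrX; apply: theta_dual_strong_pow.
Qed.

Lemma shannon_capacity_eq_of_theta_dual (T : finType) (e : rel T) (S : {set T}) :
  independentb e S -> theta_dual e #|S|%:R -> shannon_capacity R e = #|S|%:R.
Proof.
move=> S_indep dual; rewrite /shannon_capacity.
suff -> : [set powR ((alpha (strong_pow e k))%:R : R) k%:R^-1
          | k in [set k : nat | (0 < k)%N]]%classic = [set (#|S|%:R : R)]%classic.
  by rewrite sup1.
apply/seteqP; split => [_ [k /= k_gt0 <-] | _ /= ->].
  rewrite (alpha_strong_pow_eq_of_theta_dual _ S_indep dual) natrX.
  rewrite -powR_mulrn ?ler0n // -powRrM mulfV ?powRr1 ?ler0n //.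
  by rewrite pnatr_eq0 -lt0n.
exists 1%N => //=.
by rewrite (alpha_strong_pow_eq_of_theta_dual _ S_indep dual) expn1 invr1 powRr1 ?ler0n.
Qed.

Lemma lovasz_theta_eq_of_theta_dual (T : finType) (e : rel T) (S : {set T}) :
  independentb e S -> theta_dual e #|S|%:R -> (0 < #|S|)%N ->
  lovasz_theta R e = #|S|%:R.
Proof.
move=> S_indep dual S_gt0; rewrite /lovasz_theta; set F := [set _ | _ in _]%classic.
have [B B_feas trB] := lovasz_feasible_of_indep S_indep S_gt0.
have F_S : F #|S|%:R by exists B.
have F_ub : ubound F #|S|%:R.
  by move=> _ [B' B'_feas <-]; exact: lovasz_feasible_le_theta_dual dual B'_feas.
apply/le_anti/andP; split; first by apply: ge_sup => //; exists #|S|%:R.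
by apply: ub_le_sup => //; exists #|S|%:R.
Qed.

End ThetaDual.

Section TransversalDesign.
Variables (m n : nat) (P : finType) (groups blocks : {set {set P}}).
Hypotheses (m_ge2 : (2 <= m)%N) (TD : is_TD m n groups blocks).

Let groups_partition : partition groups [set: P]. Proof. by case: TD => _ []. Qed.
Let card_groups : #|groups| = m. Proof. by case: TD => _ []. Qed.
Let card_group g : g \in groups -> #|g| = n. Proof. by case: TD => _ _ /(_ g). Qed.
Let card_blockI_group B g : B \in blocks -> g \in groups -> #|B :&: g| = 1%N.
Proof. by case: TD => _ _ _ /(_ B g). Qed.
Let unique_block x y : ~~ [exists g in groups, (x \in g) && (y \in g)] ->
  #|[set B in blocks | (x \in B) && (y \in B)]| = 1%N.
Proof. by case: TD => _ _ _ _ /(_ x y). Qed.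

Definition group_of x := pblock groups x.

Lemma group_of_mem x : group_of x \in groups.
Proof. by rewrite pblock_mem // (cover_partition groups_partition) inE. Qed.

Lemma mem_group_of x : x \in group_of x.
Proof. by rewrite mem_pblock (cover_partition groups_partition) inE. Qed.

Lemma group_ofE g x : g \in groups -> x \in g -> group_of x = g.
Proof. by move=> gG xg; apply: def_pblock => //; case/and3P: groups_partition. Qed.

Lemma exists_common_group x y :
  [exists g in groups, (x \in g) && (y \in g)] = (y \in group_of x).
Proof.
apply/existsP/idP => [[g /and3P [gG xg yg]] | yg]; first by rewrite (group_ofE gG xg).
by exists (group_of x); rewrite group_of_mem mem_group_of.
Qed.

Definition pair_count x y := #|[set B in blocks | (x \in B) && (y \in B)]|.

Lemma pair_count_sum x y : pair_count x y = (\sum_(B in blocks) ((x \in B) && (y \in B)))%N.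
Proof.
rewrite /pair_count -sum1dep_card big_mkcondr /=.
by apply: eq_bigr => B _; case: (_ && _).
Qed.

Lemma pair_count_other_group x y : y \notin group_of x -> pair_count x y = 1%N.
Proof. by move=> yg; apply: unique_block; rewrite exists_common_group. Qed.

Lemma pair_count_same_group x y : y \in group_of x -> x != y -> pair_count x y = 0%N.
Proof.
move=> yg xy; apply/eqP; rewrite cards_eq0; apply/eqP/setP => B; rewrite !inE.
apply/negP => /and3P [BB xB yB]; move/eqP: xy; apply.
have /eqP/cards1P [z Bg] := card_blockI_group BB (group_of_mem x).
have : x \in B :&: group_of x by rewrite inE xB mem_group_of.
have : y \in B :&: group_of x by rewrite inE yB yg.
by rewrite Bg !inE => /eqP -> /eqP ->.
Qed.

Lemma pair_count_diag x : pair_count x x = n.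
Proof.
have [h hG hx] : exists2 h, h \in groups & h != group_of x.
  have : (0 < #|groups :\ group_of x|)%N.
    by move: m_ge2; rewrite -card_groups (cardsD1 (group_of x)) group_of_mem.
  by case/card_gt0P => h; rewrite !inE => /andP [hx hG]; exists h.
rewrite pair_count_sum -(card_group hG) -sum1_card.
transitivity (\sum_(B in blocks) \sum_(y in h) ((x \in B) && (y \in B)))%N.
  apply: eq_bigr => B BB; rewrite andbb.
  transitivity ((x \in B) * #|B :&: h|)%N; first by rewrite card_blockI_group // muln1.
  by rewrite cardsI_sum big_distrr /=; apply: eq_bigr => y _; rewrite mulnb.
rewrite exchange_big; apply: eq_bigr => y yh.
rewrite -pair_count_sum pair_count_other_group //; apply: contra hx => yg.
by rewrite -(group_ofE hG yh) (group_ofE (group_of_mem x) yg).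
Qed.

Lemma pair_countE x y : (pair_count x y + (y \in group_of x) = 1 + n * (x == y))%N.
Proof.
have [<- | xy] := eqVneq x y; first by rewrite pair_count_diag mem_group_of muln1 addnC.
have [yg | yg] := boolP (y \in group_of x); first by rewrite pair_count_same_group // muln0.
by rewrite pair_count_other_group // muln0.
Qed.

Lemma pair_count_le1 x y : x != y -> (pair_count x y <= 1)%N.
Proof.
by move=> /negbTE xy; have := pair_countE x y; rewrite xy muln0 addn0 => <-; apply: leq_addr.
Qed.

Lemma card_block B : B \in blocks -> #|B| = m.
Proof.
move=> BB; rewrite -card_groups -!sum1_card.
transitivity (\sum_(x in B) \sum_(g in groups) (x \in g))%N.
  apply: eq_bigr => x _; rewrite (bigD1 (group_of x)) ?group_of_mem //= mem_group_of.
  rewrite big1 // => g /andP [gG gx].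
  by case: (boolP (x \in g)) => // xg; rewrite (group_ofE gG xg) eqxx in gx.
rewrite exchange_big; apply: eq_bigr => g gG.
by rewrite -cardsI_sum setIC card_blockI_group.
Qed.

Lemma sum_cardI_blocks (A : {set P}) : (\sum_(D in blocks) #|D :&: A| = #|A| * n)%N.
Proof.
under eq_bigr do rewrite cardsI_sum.
rewrite exchange_big -sum_nat_const /=; apply: eq_bigr => x _.
by rewrite -(pair_count_diag x) pair_count_sum; apply: eq_bigr => D _; rewrite andbb.
Qed.

Lemma card_blocks : #|blocks| = (n * n)%N.
Proof.
have [g gG] : exists g, g \in groups.
  by apply/card_gt0P; rewrite card_groups; apply: leq_trans m_ge2.
rewrite -{1}(card_group gG) -sum_cardI_blocks -sum1_card; apply: eq_bigr => D DB.
by rewrite card_blockI_group.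
Qed.

Lemma sum_cardI_cardI_blocks (A A' : {set P}) :
  (\sum_(D in blocks) #|D :&: A| * #|D :&: A'| =
   \sum_(x in A) \sum_(y in A') pair_count x y)%N.
Proof.
transitivity (\sum_(D in blocks) \sum_(x in A) \sum_(y in A') ((x \in D) && (y \in D)))%N.
  apply: eq_bigr => D _; rewrite !cardsI_sum big_distrl /=; apply: eq_bigr => x _.
  by rewrite big_distrr /=; apply: eq_bigr => y _; rewrite mulnb.
rewrite exchange_big; apply: eq_bigr => x _.
by rewrite exchange_big; apply: eq_bigr => y _; rewrite pair_count_sum.
Qed.

Lemma sum_cardI_cardI_block B C : B \in blocks -> C \in blocks ->
  (\sum_(D in blocks) #|D :&: B| * #|D :&: C| + m = n * #|B :&: C| + m * m)%N.
Proof.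
move=> BB CB; rewrite sum_cardI_cardI_blocks.
have groups_met : (\sum_(x in B) \sum_(y in C) (y \in group_of x) = m)%N.
  rewrite -(card_block BB) -sum1_card; apply: eq_bigr => x _.
  by rewrite -cardsI_sum setIC card_blockI_group // group_of_mem.
rewrite -{1}groups_met -big_split /=.
rewrite (eq_bigr (fun x => #|C| + n * (x \in C)))%N; last first.
  move=> x _; rewrite -big_split /= (eq_bigr (fun y => 1 + n * (x == y)))%N.
    by rewrite big_split /= sum1_card -big_distrr /= sum_eq_mem.
  by move=> y _; exact: pair_countE.
rewrite big_split /= sum_nat_const -big_distrr /= -cardsI_sum setIC.
by rewrite (card_block BB) (card_block CB) addnC.
Qed.

Definition blocks_through x := [set B : block_type blocks | x \in val B].

Lemma card_blocks_through x : #|blocks_through x| = n.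
Proof.
rewrite -(card_imset _ val_inj) -(pair_count_diag x) /pair_count.
apply: eq_card => B; rewrite inE andbb.
apply/imsetP/idP => [[D] | /andP [BB xB]]; first by rewrite inE => xD ->; rewrite (valP D) xD.
by exists (Sub B BB : block_type blocks); rewrite ?inE /= ?SubK.
Qed.

Lemma blocks_through_indep x :
  independentb (compl_rel (lsg_rel blocks)) (blocks_through x).
Proof.
apply/forallP => D; apply/implyP; rewrite inE => xD.
apply/forallP => E; apply/implyP; rewrite inE => xE.
rewrite /compl_rel negb_and negbK; have [//|DE] /= := eqVneq D E.
have vDE : val D != val E by apply: contra DE => /eqP /val_inj ->.
rewrite /lsg_rel vDE /= negbK; apply/cards1P; exists x; apply/setP => y; rewrite !inE.
apply/andP/eqP => [[yD yE] | ->] //; apply/eqP; apply: contraT; rewrite eq_sym => xy.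
have two_blocks : [set val D; val E] \subset [set B in blocks | (x \in B) && (y \in B)].
  apply/subsetP => B; rewrite !inE => /orP [] /eqP ->.
  - by rewrite (valP D) xD yD.
  - by rewrite (valP E) xE yE.
have := leq_trans (subset_leq_card two_blocks) (pair_count_le1 xy).
by rewrite cards2 vDE.
Qed.

Section LatinSquareGraphDual.
Variable R : realType.
Hypothesis m_le_n : (m <= n)%N.
Local Open Scope ring_scope.
Local Notation N := (n%:R : R).
Local Notation M := (m%:R : R).

Let N_neq0 : N != 0.
Proof. by rewrite pnatr_eq0 -lt0n; apply: leq_trans m_le_n; apply: leq_trans m_ge2. Qed.

(* For the block-point incidence matrix X, the adjacency matrix of LSG(m,n) is
   A = X X^T - m I, and lsg_proj = ((n - m) I - A) / n + (m - 1) / n^2 J is the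
   orthogonal projection onto the eigenspace of A for the eigenvalue -m. *)
Definition lsg_proj (D B : {set P}) : R :=
  (D == B)%:R - #|D :&: B|%:R / N + (M - 1) / N ^+ 2.

Lemma sum_lsg_proj_mul B (F : {set P} -> R) : B \in blocks ->
  \sum_(D in blocks) lsg_proj D B * F D =
  F B - (\sum_(D in blocks) #|D :&: B|%:R * F D) / N
      + (M - 1) / N ^+ 2 * \sum_(D in blocks) F D.
Proof.
move=> BB; have -> : F B = \sum_(D in blocks) (D == B)%:R * F D.
  rewrite (bigD1 B) //= eqxx mul1r big1 ?addr0 // => D /andP [_ /negbTE ->].
  by rewrite mul0r.
rewrite mulr_suml mulr_sumr -sumrN -!big_split /=; apply: eq_bigr => D _.
by rewrite /lsg_proj; ring.
Qed.

Lemma sum_lsg_proj B : B \in blocks -> \sum_(D in blocks) lsg_proj D B = 0.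
Proof.
move=> BB; rewrite -[LHS](eq_bigr _ (fun D _ => mulr1 (lsg_proj D B))).
rewrite sum_lsg_proj_mul //; under eq_bigr do rewrite mulr1.
rewrite -natr_sum sum_cardI_blocks (card_block BB) sumr_const card_blocks !natrM.
by field.
Qed.

Lemma sum_lsg_proj_cardI B C : B \in blocks -> C \in blocks ->
  \sum_(D in blocks) lsg_proj D B * #|D :&: C|%:R = 0.
Proof.
move=> BB CB.
have sum_cardI2 : \sum_(D in blocks) #|D :&: B|%:R * #|D :&: C|%:R =
                  N * #|B :&: C|%:R + M * M - M.
  apply: (addIr M); rewrite subrK; under eq_bigr do rewrite -natrM.
  by rewrite -natr_sum -!natrM -!natrD sum_cardI_cardI_block.
rewrite sum_lsg_proj_mul // sum_cardI2 -natr_sum sum_cardI_blocks (card_block CB).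
by rewrite natrM; field.
Qed.

Lemma lsg_proj_idem B C : B \in blocks -> C \in blocks ->
  \sum_(D in blocks) lsg_proj D B * lsg_proj D C = lsg_proj B C.
Proof.
move=> BB CB; rewrite sum_lsg_proj_mul //.
under [X in _ - X / _]eq_bigr do rewrite mulrC.
by rewrite sum_lsg_proj_cardI // sum_lsg_proj // mul0r mulr0 subr0 addr0.
Qed.

Lemma lsg_theta_dual : theta_dual (compl_rel (lsg_rel blocks)) N.
Proof.
have NM_gt0 : 0 < N - M + 1.
  have : M <= N by rewrite ler_nat.
  lra.
pose c := N ^+ 2 / (N - M + 1).
have c_ge0 : 0 <= c by rewrite divr_ge0 ?sqr_ge0 ?ltW.
pose lam (D : {set P}) := c * (D \in blocks)%:R.
pose g D (B : block_type blocks) := lsg_proj D (val B).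
have gramE B C : gram lam g B C = c * lsg_proj (val B) (val C).
  rewrite -lsg_proj_idem ?(valP B) ?(valP C) // mulr_sumr big_mkcond /=.
  apply: eq_bigr => D _; rewrite /lam /g.
  by case: (D \in blocks); rewrite ?mulr1 ?mulr0 ?mul0r // mulrA.
apply: (theta_dual_one_add_gram (lam := lam) (g := g)) => [D | B | B C BC].
- by rewrite mulr_ge0 ?ler0n.
- rewrite gramE /lsg_proj eqxx mulr1n setIid card_block ?(valP B) //.
  by rewrite /c; field; rewrite N_neq0 gt_eqF.
- rewrite /compl_rel BC negbK => /andP [vBC /eqP BC1].
  rewrite gramE /lsg_proj (negbTE vBC) mulr0n BC1 /c.
  by field; rewrite N_neq0 gt_eqF.
Qed.

End LatinSquareGraphDual.

End TransversalDesign.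

Theorem mainTheorem2 (m n : nat) (Hm : (2 <= m)%N) (Hmn : (m < n)%N)
    (P : finType) (groups blocks : {set {set P}})
    (HTD : is_TD m n groups blocks) (R : realType) :
  [/\ alpha (compl_rel (lsg_rel blocks)) = n,
      shannon_capacity R (compl_rel (lsg_rel blocks)) = (n%:R)%R &
      lovasz_theta R (compl_rel (lsg_rel blocks)) = (n%:R)%R].
Proof.
have n_gt0 : (0 < n)%N by apply: leq_trans Hmn.
have [x _] : exists x, x \in [set: P].
  apply/card_gt0P; case: HTD => card_P _ _ _ _.
  by rewrite cardsT card_P muln_gt0 n_gt0 andbT (leq_trans _ Hm).
have S_indep := blocks_through_indep Hm HTD x.
have card_S := card_blocks_through Hm HTD x.
have dual : theta_dual (compl_rel (lsg_rel blocks)) (#|blocks_through blocks x|%:R : R).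
  by rewrite card_S; exact: lsg_theta_dual Hm HTD R (ltnW Hmn).
rewrite -card_S; split.
- exact: alpha_eq_of_theta_dual S_indep dual.
- exact: shannon_capacity_eq_of_theta_dual S_indep dual.
- by apply: lovasz_theta_eq_of_theta_dual S_indep dual _; rewrite card_S.
Qed.
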